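(* Let $\tau>0$, $\zeta\in\mathbb{C}$, $\sigma\in\{1,-1\}$, $q\in\mathbb{C}$, and set $$A=\begin{pmatrix}-i\zeta&0\\0&i\zeta\end{pmatrix},\qquad B=\begin{pmatrix}0&q\\-\sigma\overline{q}&0\end{pmatrix}.$$ Consider the 11-factor product $$P=e^{\frac{7}{48}\tau B}e^{\frac{1}{3}\tau A}e^{\frac{3}{8}\tau B}e^{-\frac{1}{3}\tau A}e^{-\frac{1}{48}\tau B}e^{\tau A}e^{-\frac{1}{48}\tau B}e^{-\frac{1}{3}\tau A}e^{\frac{3}{8}\tau B}e^{\frac{1}{3}\tau A}e^{\frac{7}{48}\tau B}.$$ Let $Z=e^{-i\tau\zeta/3}$ and $W=Z^2$. Then $P=Z^{-7}\,\hat S(W)$, where $\hat S(W)$ is a $2\times 2$ matrix whose entries are polynomials in $W$ of degree at most $7$ with coefficients independent of $\zeta$ (depending only on $\tau,q,\sigma$). Equivalently, $P=Z^{-7}S(Z)$ with $S$ a matrix polynomial in $Z$ of degree at most $14$ containing only even powers of $Z$.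
   Context: $\overline{q}$ denotes the complex conjugate of $q$; $e^{M}$ denotes the matrix exponential. *)

From Stdlib Require Import Reals Arith Factorial ClassicalEpsilon.
Open Scope R_scope.

Record Cplx := mkC { Cre : R ; Cim : R }.

Definition RtoC (r : R) : Cplx := mkC r 0.
Definition C0 : Cplx := RtoC 0.
Definition C1 : Cplx := RtoC 1.
Definition Ci : Cplx := mkC 0 1.
Definition Cadd (z w : Cplx) : Cplx := mkC (Cre z + Cre w) (Cim z + Cim w).
Definition Copp (z : Cplx) : Cplx := mkC (- Cre z) (- Cim z).
Definition Cmul (z w : Cplx) : Cplx :=
  mkC (Cre z * Cre w - Cim z * Cim w) (Cre z * Cim w + Cim z * Cre w).
Definition Cconj (z : Cplx) : Cplx := mkC (Cre z) (- Cim z).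
Definition Cinv (z : Cplx) : Cplx :=
  let d := Cre z * Cre z + Cim z * Cim z in mkC (Cre z / d) (- Cim z / d).
Fixpoint Cpow (z : Cplx) (n : nat) : Cplx :=
  match n with O => C1 | S k => Cmul z (Cpow z k) end.
Definition Cexp (z : Cplx) : Cplx :=
  mkC (exp (Cre z) * cos (Cim z)) (exp (Cre z) * sin (Cim z)).

Record M2 := mkM2 { m11 : Cplx ; m12 : Cplx ; m21 : Cplx ; m22 : Cplx }.

Definition M0 : M2 := mkM2 C0 C0 C0 C0.
Definition M1 : M2 := mkM2 C1 C0 C0 C1.
Definition Madd (A B : M2) : M2 :=
  mkM2 (Cadd (m11 A) (m11 B)) (Cadd (m12 A) (m12 B))
       (Cadd (m21 A) (m21 B)) (Cadd (m22 A) (m22 B)).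
Definition Mmul (A B : M2) : M2 :=
  mkM2 (Cadd (Cmul (m11 A) (m11 B)) (Cmul (m12 A) (m21 B)))
       (Cadd (Cmul (m11 A) (m12 B)) (Cmul (m12 A) (m22 B)))
       (Cadd (Cmul (m21 A) (m11 B)) (Cmul (m22 A) (m21 B)))
       (Cadd (Cmul (m21 A) (m12 B)) (Cmul (m22 A) (m22 B))).
Definition Mscale (c : Cplx) (A : M2) : M2 :=
  mkM2 (Cmul c (m11 A)) (Cmul c (m12 A)) (Cmul c (m21 A)) (Cmul c (m22 A)).
Fixpoint Mpow (A : M2) (n : nat) : M2 :=
  match n with O => M1 | S k => Mmul A (Mpow A k) end.

Fixpoint expsum (A : M2) (N : nat) : M2 :=
  match N with
  | O => M1
  | S n => Madd (expsum A n) (Mscale (RtoC (/ INR (fact (S n)))) (Mpow A (S n)))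
  end.

Definition Ccv (u : nat -> Cplx) (l : Cplx) : Prop :=
  Un_cv (fun n => Cre (u n)) (Cre l) /\ Un_cv (fun n => Cim (u n)) (Cim l).

Definition Mcv (u : nat -> M2) (L : M2) : Prop :=
  Ccv (fun n => m11 (u n)) (m11 L) /\ Ccv (fun n => m12 (u n)) (m12 L) /\
  Ccv (fun n => m21 (u n)) (m21 L) /\ Ccv (fun n => m22 (u n)) (m22 L).

(* matrix exponential e^A := lim_N sum_{k=0}^N A^k/k! (the series always
   converges; epsilon picks its (unique) limit) *)
Definition mexp (A : M2) : M2 :=
  epsilon (inhabits M0) (fun E => Mcv (fun N => expsum A N) E).

Fixpoint Mpoly (s : nat -> M2) (n : nat) (w : Cplx) : M2 :=
  match n with
  | O => Mscale (Cpow w 0) (s 0%nat)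
  | S k => Madd (Mpoly s k w) (Mscale (Cpow w (S k)) (s (S k)))
  end.

Definition matA (zeta : Cplx) : M2 :=
  mkM2 (Copp (Cmul Ci zeta)) C0 C0 (Cmul Ci zeta).
Definition matB (sigma : R) (q : Cplx) : M2 :=
  mkM2 C0 q (Cmul (RtoC (- sigma)) (Cconj q)) C0.

Definition E (c tau : R) (M : M2) : M2 := mexp (Mscale (RtoC (c * tau)) M).

Definition prodP (tau sigma : R) (q zeta : Cplx) : M2 :=
  let A := matA zeta in let B := matB sigma q in
  Mmul (E (7/48) tau B) (Mmul (E (1/3) tau A) (Mmul (E (3/8) tau B)
  (Mmul (E (-(1/3)) tau A) (Mmul (E (-(1/48)) tau B) (Mmul (E 1 tau A)
  (Mmul (E (-(1/48)) tau B) (Mmul (E (-(1/3)) tau A) (Mmul (E (3/8) tau B)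
  (Mmul (E (1/3) tau A) (E (7/48) tau B)))))))))).

(** With [u = -i tau zeta / 3], [Z = e^u] and [W = Z^2], the factor
    [e^{c tau A}] is [diag(e^{3cu}, e^{-3cu})].  For [c = 1/3, -1/3, 1] this
    is [Z^-1 diag(W, 1)], [Z^-1 diag(1, W)] and [Z^-3 diag(W^3, 1)], so pulling
    the scalars out of the product leaves [Z^-7] times a product of the
    [zeta]-independent factors [e^{c tau B}] and diagonal matrices whose entries
    are powers of [W]; the [W]-degrees add up to [1 + 1 + 3 + 1 + 1 = 7].
    The only analytic input is that the exponential series of a diagonal
    matrix converges to the diagonal of complex exponentials [e^a (cos b +
    i sin b)]; the real and imaginary parts of [sum w^n t^n / n!] solve the
    same linear ODE as [e^{at} (cos bt, sin bt)], hence agree with it. *)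
From Pilot Require Import Defs.
From Stdlib Require Import Reals Lra Lia ClassicalEpsilon.
From Coquelicot Require Import Rcomplements Rbar Hierarchy Lim_seq PSeries Derive AutoDerive ElemFct.
Import Defs.
Open Scope R_scope.

Definition Csub (z w : Cplx) : Cplx := Cadd z (Copp w).

Lemma Cplx_eq (z w : Cplx) : Cre z = Cre w -> Cim z = Cim w -> z = w.
Proof. destruct z, w; simpl; intros; subst; reflexivity. Qed.

Lemma Cplx_ring : ring_theory C0 C1 Cadd Cmul Csub Copp (@eq Cplx).
Proof.
  constructor; intros; apply Cplx_eq;
    unfold Csub, Cadd, Cmul, Copp, C0, C1, RtoC; simpl; ring.
Qed.
Add Ring Cplx_ring : Cplx_ring.

Lemma Cpow_mul_distr (z w : Cplx) (n : nat) :
  Cpow (Cmul z w) n = Cmul (Cpow z n) (Cpow w n).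
Proof. induction n as [|n IH]; simpl; [ring | rewrite IH; ring]. Qed.

Lemma Cpow_C1 (n : nat) : Cpow C1 n = C1.
Proof. induction n as [|n IH]; simpl; [reflexivity | rewrite IH; ring]. Qed.

Lemma Cinv_unique (z w : Cplx) : Cmul z w = C1 -> Cinv z = w.
Proof.
  destruct z as [a b], w as [c d]; intros H; injection H as H1 H2; cbn in *.
  assert (Hd : a * a + b * b <> 0).
  { intros Hd. assert (a = 0) by nra. assert (b = 0) by nra. subst. lra. }
  unfold Cinv; cbn; f_equal; apply (Rmult_eq_reg_r (a * a + b * b)); auto;
    field_simplify; auto.
  - transitivity (a * (a * c - b * d) + b * (a * d + b * c)); [rewrite H1, H2|]; ring.
  - transitivity (a * (a * d + b * c) - b * (a * c - b * d)); [rewrite H1, H2|]; ring.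
Qed.

Lemma Cexp_add (z w : Cplx) : Cexp (Cadd z w) = Cmul (Cexp z) (Cexp w).
Proof.
  destruct z as [a b], w as [c d].
  apply Cplx_eq; cbn; rewrite exp_plus, ?cos_plus, ?sin_plus; ring.
Qed.

Lemma Cexp_C0 : Cexp C0 = C1.
Proof. apply Cplx_eq; cbn; rewrite ?exp_0, ?cos_0, ?sin_0; ring. Qed.

Lemma Cexp_opp_r (z : Cplx) : Cmul (Cexp z) (Cexp (Copp z)) = C1.
Proof. rewrite <- Cexp_add, <- Cexp_C0; f_equal; ring. Qed.

Lemma Cexp_natmul (n : nat) (z : Cplx) :
  Cexp (Cmul (RtoC (INR n)) z) = Cpow (Cexp z) n.
Proof.
  induction n as [|n IH]; simpl Cpow.
  - rewrite <- Cexp_C0; f_equal; apply Cplx_eq; cbn; ring.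
  - rewrite <- IH, <- Cexp_add; f_equal; apply Cplx_eq; cbn [Cre Cim Cadd Cmul RtoC]; rewrite S_INR; ring.
Qed.

Definition diag (a d : Cplx) : M2 := mkM2 a C0 C0 d.

Lemma M2_eq (X Y : M2) :
  m11 X = m11 Y -> m12 X = m12 Y -> m21 X = m21 Y -> m22 X = m22 Y -> X = Y.
Proof. destruct X, Y; simpl; intros; subst; reflexivity. Qed.

Ltac M2_ring :=
  apply M2_eq; cbn [m11 m12 m21 m22 Madd Mmul Mscale Mpoly M0 M1 diag Cpow]; ring.

Lemma Mmul_addr (X Y Y' : M2) : Mmul X (Madd Y Y') = Madd (Mmul X Y) (Mmul X Y').
Proof. M2_ring. Qed.

Lemma Mmul_scalel (c : Cplx) (X Y : M2) : Mmul (Mscale c X) Y = Mscale c (Mmul X Y).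
Proof. M2_ring. Qed.

Lemma Mmul_scaler (c : Cplx) (X Y : M2) : Mmul X (Mscale c Y) = Mscale c (Mmul X Y).
Proof. M2_ring. Qed.

Lemma Mscale_addr (c : Cplx) (X Y : M2) :
  Mscale c (Madd X Y) = Madd (Mscale c X) (Mscale c Y).
Proof. M2_ring. Qed.

Lemma MscaleA (c d : Cplx) (X : M2) : Mscale c (Mscale d X) = Mscale (Cmul c d) X.
Proof. M2_ring. Qed.

(** * Matrix polynomials *)

Definition is_Mpoly (f : Cplx -> M2) (n : nat) : Prop :=
  exists s : nat -> M2, forall w, f w = Mpoly s n w.

Lemma is_Mpoly_ext (f g : Cplx -> M2) (n : nat) :
  (forall w, f w = g w) -> is_Mpoly f n -> is_Mpoly g n.
Proof. intros Hfg [s Hs]; exists s; intros w; rewrite <- Hfg; apply Hs. Qed.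

Lemma is_Mpoly_const (C : M2) : is_Mpoly (fun _ => C) 0.
Proof. exists (fun _ => C); intros w; M2_ring. Qed.

Lemma is_Mpoly_mull (C : M2) (f : Cplx -> M2) (n : nat) :
  is_Mpoly f n -> is_Mpoly (fun w => Mmul C (f w)) n.
Proof.
  intros [s Hs]; exists (fun k => Mmul C (s k)); intros w; rewrite Hs; clear Hs.
  induction n as [|n IH]; simpl; rewrite ?Mmul_addr, Mmul_scaler, ?IH; reflexivity.
Qed.

Lemma is_Mpoly_add (f g : Cplx -> M2) (n : nat) :
  is_Mpoly f n -> is_Mpoly g n -> is_Mpoly (fun w => Madd (f w) (g w)) n.
Proof.
  intros [s Hs] [t Ht]; exists (fun k => Madd (s k) (t k)); intros w; rewrite Hs, Ht; clear Hs Ht.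
  induction n as [|n IH]; simpl; [|rewrite <- IH]; M2_ring.
Qed.

Lemma Mpoly_ext (s t : nat -> M2) (n : nat) (w : Cplx) :
  (forall k, (k <= n)%nat -> s k = t k) -> Mpoly s n w = Mpoly t n w.
Proof.
  induction n as [|n IH]; intros Hst; simpl; rewrite Hst, ?IH; auto.
Qed.

Lemma is_Mpoly_widen1 (f : Cplx -> M2) (n : nat) : is_Mpoly f n -> is_Mpoly f (S n).
Proof.
  intros [s Hs]; exists (fun k => if Nat.leb k n then s k else M0); intros w; rewrite Hs.
  cbn [Mpoly]; rewrite (proj2 (Nat.leb_gt (S n) n)) by lia.
  rewrite (Mpoly_ext s (fun k => if Nat.leb k n then s k else M0)); [M2_ring|].
  intros k Hk; rewrite (proj2 (Nat.leb_le k n) Hk); reflexivity.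
Qed.

Lemma is_Mpoly_widen (f : Cplx -> M2) (m n : nat) :
  is_Mpoly f m -> (m <= n)%nat -> is_Mpoly f n.
Proof. intros Hf Hmn; induction Hmn; auto using is_Mpoly_widen1. Qed.

Lemma is_Mpoly_shift (f : Cplx -> M2) (n : nat) :
  is_Mpoly f n -> is_Mpoly (fun w => Mscale w (f w)) (S n).
Proof.
  intros [s Hs]; exists (fun k => match k with O => M0 | S k' => s k' end).
  intros w; rewrite Hs; clear Hs.
  induction n as [|n IH]; simpl.
  - M2_ring.
  - rewrite Mscale_addr, IH, MscaleA; reflexivity.
Qed.

Lemma is_Mpoly_scale_pow (k : nat) (f : Cplx -> M2) (n : nat) :
  is_Mpoly f n -> is_Mpoly (fun w => Mscale (Cpow w k) (f w)) (k + n).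
Proof.
  intros Hf; induction k as [|k IH].
  - apply (is_Mpoly_ext f); [intros w; M2_ring | exact Hf].
  - apply (is_Mpoly_ext (fun w => Mscale w (Mscale (Cpow w k) (f w)))).
    + intros w; rewrite MscaleA; reflexivity.
    + apply is_Mpoly_shift, IH.
Qed.

Lemma is_Mpoly_mul_diag (j k : nat) (f : Cplx -> M2) (n : nat) :
  is_Mpoly f n ->
  is_Mpoly (fun w => Mmul (diag (Cpow w j) (Cpow w k)) (f w)) (Nat.max j k + n).
Proof.
  intros Hf.
  apply (is_Mpoly_ext (fun w => Madd (Mscale (Cpow w j) (Mmul (diag C1 C0) (f w)))
                                     (Mscale (Cpow w k) (Mmul (diag C0 C1) (f w))))).
  { intros w; M2_ring. }
  apply is_Mpoly_add; eapply is_Mpoly_widen;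
    try (apply is_Mpoly_scale_pow, is_Mpoly_mull, Hf); lia.
Qed.

(** * The exponential of a diagonal matrix *)

Definition cRe (a b : R) (n : nat) : R := Cre (Cpow (mkC a b) n) / INR (Factorial.fact n).
Definition cIm (a b : R) (n : nat) : R := Cim (Cpow (mkC a b) n) / INR (Factorial.fact n).

Lemma pow_div_fact_le_exp (y : R) (n : nat) :
  0 <= y -> y ^ n / INR (Factorial.fact n) <= exp y.
Proof.
  intros Hy; eapply Rle_trans; [|apply (exp_ge_taylor y n Hy)].
  destruct n as [|n]; [simpl; lra|]; rewrite tech5.
  assert (0 <= sum_f_R0 (fun k => y ^ k / INR (Factorial.fact k)) n).
  { apply cond_pos_sum; intros k; apply Rmult_le_pos;
      [apply pow_le; auto | left; apply Rinv_0_lt_compat, INR_fact_lt_0]. }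
  lra.
Qed.

Lemma CV_radius_factorial_bound (c : nat -> R) (M : R) :
  0 <= M -> (forall n, Rabs (c n) <= M ^ n / INR (Factorial.fact n)) ->
  forall x, Rbar_lt (Rabs x) (CV_radius c).
Proof.
  intros HM Hc x.
  set (r := Rabs x + 1); assert (Hr : 0 <= r) by (unfold r; pose proof (Rabs_pos x); lra).
  apply Rbar_lt_le_trans with r; [simpl; unfold r; lra|].
  apply (proj1 (CV_radius_bounded c)); exists (exp (M * r)); intros n.
  rewrite Rabs_mult, (Rabs_pos_eq (r ^ n)) by (apply pow_le; auto).
  apply Rle_trans with ((M * r) ^ n / INR (Factorial.fact n)).
  - replace ((M * r) ^ n / INR (Factorial.fact n)) with (M ^ n / INR (Factorial.fact n) * r ^ n)
      by (rewrite Rpow_mult_distr; unfold Rdiv; ring).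
    apply Rmult_le_compat_r; [apply pow_le | apply Hc]; auto.
  - apply pow_div_fact_le_exp, Rmult_le_pos; auto.
Qed.

Lemma Cpow_norm1_le (a b : R) (n : nat) :
  Rabs (Cre (Cpow (mkC a b) n)) + Rabs (Cim (Cpow (mkC a b) n)) <= (Rabs a + Rabs b) ^ n.
Proof.
  induction n as [|n IH]; simpl.
  - rewrite Rabs_R1, Rabs_R0; lra.
  - set (x := Cre (Cpow (mkC a b) n)) in *; set (y := Cim (Cpow (mkC a b) n)) in *.
    pose proof (Rabs_triang (a * x) (- (b * y))); pose proof (Rabs_triang (a * y) (b * x)).
    unfold Rminus; rewrite Rabs_Ropp, !Rabs_mult in *.
    pose proof (Rabs_pos a); pose proof (Rabs_pos b);
      pose proof (Rabs_pos x); pose proof (Rabs_pos y).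
    nra.
Qed.

Lemma Rabs_div_fact_le (v : R) (M : R) (n : nat) :
  Rabs v <= M -> Rabs (v / INR (Factorial.fact n)) <= M / INR (Factorial.fact n).
Proof.
  intros Hv; pose proof (INR_fact_lt_0 n).
  unfold Rdiv; rewrite Rabs_mult, Rabs_inv, (Rabs_pos_eq (INR _)) by lra.
  apply Rmult_le_compat_r; [left; apply Rinv_0_lt_compat|]; lra.
Qed.

Lemma CV_radius_cRe (a b x : R) : Rbar_lt (Rabs x) (CV_radius (cRe a b)).
Proof.
  apply (CV_radius_factorial_bound _ (Rabs a + Rabs b)).
  - pose proof (Rabs_pos a); pose proof (Rabs_pos b); lra.
  - intros n; apply Rabs_div_fact_le.
    pose proof (Cpow_norm1_le a b n); pose proof (Rabs_pos (Cim (Cpow (mkC a b) n))); lra.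
Qed.

Lemma CV_radius_cIm (a b x : R) : Rbar_lt (Rabs x) (CV_radius (cIm a b)).
Proof.
  apply (CV_radius_factorial_bound _ (Rabs a + Rabs b)).
  - pose proof (Rabs_pos a); pose proof (Rabs_pos b); lra.
  - intros n; apply Rabs_div_fact_le.
    pose proof (Cpow_norm1_le a b n); pose proof (Rabs_pos (Cre (Cpow (mkC a b) n))); lra.
Qed.

Lemma PS_derive_cRe (a b : R) (n : nat) :
  PS_derive (cRe a b) n = a * cRe a b n + - b * cIm a b n.
Proof.
  unfold PS_derive, cRe, cIm; rewrite fact_simpl, mult_INR; simpl Cpow; cbn [Cre Cim Cmul].
  pose proof (INR_fact_lt_0 n); pose proof (lt_0_INR (S n) ltac:(lia)).
  field; lra.
Qed.

Lemma PS_derive_cIm (a b : R) (n : nat) :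
  PS_derive (cIm a b) n = a * cIm a b n + b * cRe a b n.
Proof.
  unfold PS_derive, cRe, cIm; rewrite fact_simpl, mult_INR; simpl Cpow; cbn [Cre Cim Cmul].
  pose proof (INR_fact_lt_0 n); pose proof (lt_0_INR (S n) ltac:(lia)).
  field; lra.
Qed.

Lemma PSeries_lincomb (p q : R) (u v : nat -> R) (t : R) :
  ex_pseries u t -> ex_pseries v t ->
  PSeries (fun n => p * u n + q * v n) t = p * PSeries u t + q * PSeries v t.
Proof.
  intros Hu Hv.
  rewrite (PSeries_ext _ (PS_plus (PS_scal p u) (PS_scal q v))) by reflexivity.
  rewrite PSeries_plus, !PSeries_scal; auto;
    apply ex_pseries_scal; auto; apply Rmult_comm.
Qed.

Lemma is_derive_PSeries_lincomb (c u v : nat -> R) (p q t : R) :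
  (forall n, PS_derive c n = p * u n + q * v n) ->
  (forall x, Rbar_lt (Rabs x) (CV_radius c)) ->
  (forall x, Rbar_lt (Rabs x) (CV_radius u)) ->
  (forall x, Rbar_lt (Rabs x) (CV_radius v)) ->
  is_derive (PSeries c) t (p * PSeries u t + q * PSeries v t).
Proof.
  intros Hc Rc Ru Rv.
  rewrite <- PSeries_lincomb by (apply CV_radius_inside; auto).
  rewrite <- (PSeries_ext _ _ t Hc); apply is_derive_PSeries, Rc.
Qed.

Lemma Un_cv_PSeries_1 (c : nat -> R) :
  ex_pseries c 1 -> Un_cv (sum_f_R0 c) (PSeries c 1).
Proof.
  intros Hc; apply is_lim_seq_Reals.
  eapply is_lim_seq_ext; [|exact (PSeries_correct c 1 Hc)].
  intros n; rewrite sum_n_Reals; apply sum_eq; intros i _.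
  change (scal (pow_n 1 i) (c i)) with (pow_n 1 i * c i); rewrite pow_n_pow, pow1; ring.
Qed.

Lemma rotation_ode_at_1 (f g : R -> R) (a b : R) :
  (forall t, is_derive f t (a * f t - b * g t)) ->
  (forall t, is_derive g t (a * g t + b * f t)) ->
  f 0 = 1 -> g 0 = 0 -> f 1 = exp a * cos b /\ g 1 = exp a * sin b.
Proof.
  intros Hf Hg Hf0 Hg0.
  (* [e^{-2at}] times the squared distance to the explicit solution is constant *)
  set (F := fun t => exp (-2 * a * t) *
    ((f t - exp (a * t) * cos (b * t)) ^ 2 + (g t - exp (a * t) * sin (b * t)) ^ 2)).
  assert (HF : forall t, is_derive F t 0).
  { intros t; unfold F; auto_derive.
    - repeat split; [exists (a * f t - b * g t) | exists (a * g t + b * f t)]; auto.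
    - replace (Derive (fun x => f x) t) with (a * f t - b * g t)
        by (symmetry; apply is_derive_unique, Hf).
      replace (Derive (fun x => g x) t) with (a * g t + b * f t)
        by (symmetry; apply is_derive_unique, Hg).
      ring. }
  assert (HF1 : F 1 = F 0).
  { destruct (MVT_cor2 F (fun _ => 0) 0 1) as [c [Hc _]]; [lra| |lra].
    intros c _; apply is_derive_Reals, HF. }
  assert (HF0 : F 0 = 0).
  { unfold F; rewrite Hf0, Hg0, !Rmult_0_r, exp_0, cos_0, sin_0; ring. }
  rewrite HF0 in HF1; unfold F in HF1; rewrite !Rmult_1_r in HF1.
  pose proof (exp_pos (-2 * a)).
  set (x := f 1 - exp a * cos b) in *; set (y := g 1 - exp a * sin b) in *.
  assert (Hxy : x ^ 2 + y ^ 2 = 0) by nra.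
  assert (x = 0) by nra; assert (y = 0) by nra; unfold x, y in *; lra.
Qed.

Lemma partial_sums_Cexp (a b : R) :
  Un_cv (sum_f_R0 (cRe a b)) (exp a * cos b) /\ Un_cv (sum_f_R0 (cIm a b)) (exp a * sin b).
Proof.
  destruct (rotation_ode_at_1 (PSeries (cRe a b)) (PSeries (cIm a b)) a b) as [H1 H2].
  - intros t; unfold Rminus; rewrite Ropp_mult_distr_l.
    apply is_derive_PSeries_lincomb;
      auto using PS_derive_cRe, CV_radius_cRe, CV_radius_cIm.
  - intros t; apply is_derive_PSeries_lincomb;
      auto using PS_derive_cIm, CV_radius_cRe, CV_radius_cIm.
  - rewrite PSeries_0; unfold cRe; simpl; field.
  - rewrite PSeries_0; unfold cIm; simpl; field.
  - rewrite <- H1, <- H2; split; apply Un_cv_PSeries_1, CV_radius_inside;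
      auto using CV_radius_cRe, CV_radius_cIm.
Qed.

Fixpoint Cexpsum (w : Cplx) (N : nat) : Cplx :=
  match N with
  | O => C1
  | S n => Cadd (Cexpsum w n) (Cmul (RtoC (/ INR (Factorial.fact (S n)))) (Cpow w (S n)))
  end.

Lemma Ccv_ext (u v : nat -> Cplx) (l : Cplx) : (forall n, u n = v n) -> Ccv v l -> Ccv u l.
Proof.
  intros H [H1 H2]; split; eapply Un_cv_ext; try eassumption;
    intros n; simpl; rewrite H; reflexivity.
Qed.

Lemma Ccv_const (z : Cplx) : Ccv (fun _ => z) z.
Proof.
  split; intros eps Heps; exists 0%nat; intros;
    unfold R_dist; rewrite Rminus_diag, Rabs_R0; lra.
Qed.

Lemma Ccv_unique (u : nat -> Cplx) (l l' : Cplx) : Ccv u l -> Ccv u l' -> l = l'.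
Proof. intros [H1 H2] [H3 H4]; apply Cplx_eq; eapply UL_sequence; eauto. Qed.

Lemma Mcv_unique (u : nat -> M2) (L L' : M2) : Mcv u L -> Mcv u L' -> L = L'.
Proof.
  intros [H1 [H2 [H3 H4]]] [K1 [K2 [K3 K4]]]; apply M2_eq; eapply Ccv_unique; eauto.
Qed.

Lemma Cexpsum_parts (a b : R) (N : nat) :
  Cre (Cexpsum (mkC a b) N) = sum_f_R0 (cRe a b) N /\
  Cim (Cexpsum (mkC a b) N) = sum_f_R0 (cIm a b) N.
Proof.
  unfold cRe, cIm; induction N as [|N [IH1 IH2]].
  - simpl; split; field.
  - cbn [Cexpsum sum_f_R0]; rewrite <- IH1, <- IH2.
    cbn [Cre Cim Cadd Cmul RtoC]; unfold Rdiv; split; ring.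
Qed.

Lemma Cexpsum_cv (w : Cplx) : Ccv (Cexpsum w) (Cexp w).
Proof.
  destruct w as [a b]; destruct (partial_sums_Cexp a b) as [H1 H2]; split.
  - eapply Un_cv_ext; [|exact H1]; intros N; symmetry; apply Cexpsum_parts.
  - eapply Un_cv_ext; [|exact H2]; intros N; symmetry; apply Cexpsum_parts.
Qed.

Lemma expsum_diag (a d : Cplx) (N : nat) :
  expsum (diag a d) N = diag (Cexpsum a N) (Cexpsum d N).
Proof.
  assert (Hpow : forall n, Mpow (diag a d) n = diag (Cpow a n) (Cpow d n)).
  { induction n as [|n IH]; [reflexivity|]; cbn [Mpow]; rewrite IH; M2_ring. }
  induction N as [|N IH]; [reflexivity|].
  cbn [expsum Cexpsum]; rewrite IH, Hpow; M2_ring.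
Qed.

Lemma mexp_diag (a d : Cplx) : mexp (diag a d) = diag (Cexp a) (Cexp d).
Proof.
  assert (H : Mcv (expsum (diag a d)) (diag (Cexp a) (Cexp d))).
  { repeat split; eapply Ccv_ext; try (intros n; rewrite expsum_diag; reflexivity);
      cbn [m11 m12 m21 m22 diag]; apply Cexpsum_cv || apply Ccv_const. }
  unfold mexp; eapply Mcv_unique; [|exact H].
  apply epsilon_spec; exists (diag (Cexp a) (Cexp d)); exact H.
Qed.

Section ExpMatA.

Variables (tau : R) (zeta : Cplx).

Let u : Cplx := Cmul (Copp Ci) (Cmul (RtoC (tau / 3)) zeta).

Lemma E_matA_pos (c : R) (k : nat) :
  c = INR k / 3 -> E c tau (matA zeta) = diag (Cpow (Cexp u) k) (Cpow (Cexp (Copp u)) k).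
Proof.
  intros ->; rewrite <- !Cexp_natmul, <- mexp_diag; unfold E, u; f_equal;
    apply M2_eq; apply Cplx_eq; cbn; field.
Qed.

Lemma E_matA_neg (c : R) (k : nat) :
  c = - (INR k / 3) -> E c tau (matA zeta) = diag (Cpow (Cexp (Copp u)) k) (Cpow (Cexp u) k).
Proof.
  intros ->; rewrite <- !Cexp_natmul, <- mexp_diag; unfold E, u; f_equal;
    apply M2_eq; apply Cplx_eq; cbn; field.
Qed.

End ExpMatA.

(* The paper's [\hat S(W)], with [B1, B2, B3] standing for [e^{c tau B}], [c = 7/48, 3/8, -1/48]. *)
Definition Shat (B1 B2 B3 : M2) (W : Cplx) : M2 :=
  Mmul B1 (Mmul (diag (Cpow W 1) (Cpow W 0)) (Mmul B2 (Mmul (diag (Cpow W 0) (Cpow W 1))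
  (Mmul B3 (Mmul (diag (Cpow W 3) (Cpow W 0)) (Mmul B3 (Mmul (diag (Cpow W 0) (Cpow W 1))
  (Mmul B2 (Mmul (diag (Cpow W 1) (Cpow W 0)) B1))))))))).

Lemma is_Mpoly_Shat (B1 B2 B3 : M2) : is_Mpoly (Shat B1 B2 B3) 7.
Proof.
  unfold Shat.
  apply is_Mpoly_mull, (is_Mpoly_mul_diag 1 0 _ 6), is_Mpoly_mull, (is_Mpoly_mul_diag 0 1 _ 5),
    is_Mpoly_mull, (is_Mpoly_mul_diag 3 0 _ 2), is_Mpoly_mull, (is_Mpoly_mul_diag 0 1 _ 1),
    is_Mpoly_mull, (is_Mpoly_mul_diag 1 0 _ 0), is_Mpoly_const.
Qed.

Section Factorisation.

Variables (Z Zi : Cplx).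
Hypothesis HZ : Cmul Z Zi = C1.

Lemma Cpow_sq_factor (k : nat) : Cmul (Cpow Zi k) (Cpow (Cpow Z 2) k) = Cpow Z k.
Proof.
  rewrite <- Cpow_mul_distr; f_equal; simpl.
  transitivity (Cmul Z (Cmul Z Zi)); [ring | rewrite HZ; ring].
Qed.

Lemma diag_pow_factor (k : nat) :
  diag (Cpow Z k) (Cpow Zi k) = Mscale (Cpow Zi k) (diag (Cpow (Cpow Z 2) k) (Cpow (Cpow Z 2) 0)).
Proof. rewrite <- (Cpow_sq_factor k); M2_ring. Qed.

Lemma diag_pow_factor_swap (k : nat) :
  diag (Cpow Zi k) (Cpow Z k) = Mscale (Cpow Zi k) (diag (Cpow (Cpow Z 2) 0) (Cpow (Cpow Z 2) k)).
Proof. rewrite <- (Cpow_sq_factor k); M2_ring. Qed.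

Lemma palindrome_factor (B1 B2 B3 : M2) :
  Mmul B1 (Mmul (diag (Cpow Z 1) (Cpow Zi 1)) (Mmul B2 (Mmul (diag (Cpow Zi 1) (Cpow Z 1))
  (Mmul B3 (Mmul (diag (Cpow Z 3) (Cpow Zi 3)) (Mmul B3 (Mmul (diag (Cpow Zi 1) (Cpow Z 1))
  (Mmul B2 (Mmul (diag (Cpow Z 1) (Cpow Zi 1)) B1)))))))))
  = Mscale (Cinv (Cpow Z 7)) (Shat B1 B2 B3 (Cpow Z 2)).
Proof.
  rewrite !diag_pow_factor, !diag_pow_factor_swap.
  repeat rewrite ?Mmul_scalel, ?Mmul_scaler; rewrite !MscaleA.
  rewrite (Cinv_unique (Cpow Z 7) (Cpow Zi 7)).
  - f_equal; cbn [Cpow]; ring.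
  - rewrite <- Cpow_mul_distr, HZ; apply Cpow_C1.
Qed.

End Factorisation.

Theorem mainTheorem2 (tau sigma : R) (q : Cplx)
  (htau : 0 < tau) (hsigma : sigma = 1 \/ sigma = -1) :
  exists s : nat -> M2,
    forall zeta : Cplx,
      let Z := Cexp (Cmul (Copp Ci) (Cmul (RtoC (tau / 3)) zeta)) in
      let W := Cpow Z 2 in
      prodP tau sigma q zeta = Mscale (Cinv (Cpow Z 7)) (Mpoly s 7 W).
Proof.
  set (B := matB sigma q).
  destruct (is_Mpoly_Shat (E (7/48) tau B) (E (3/8) tau B) (E (-(1/48)) tau B)) as [s Hs].
  exists s; intros zeta Z W; unfold W; rewrite <- Hs.
  unfold prodP; cbv zeta; fold B.
  rewrite (E_matA_pos tau zeta (1/3) 1), (E_matA_neg tau zeta (-(1/3)) 1),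
    (E_matA_pos tau zeta 1 3) by (simpl; field).
  apply palindrome_factor, Cexp_opp_r.
Qed.
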